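(* Let $L,n$ be positive integers. As maps on $\mathcal M(L,n)$, the operators $e_i^\star$ ($1\le i\le L-1$) satisfy: (i) $(e_i^\star)^2=e_i^\star$; (ii) $e_i^\star e_j^\star=e_j^\star e_i^\star$ whenever $|i-j|\ge2$; (iii) $e_i^\star e_{i+1}^\star e_i^\star=e_{i+1}^\star e_i^\star e_{i+1}^\star$ for $1\le i\le L-2$.
   Context: $\mathcal M(L,n)$ is the set of tuples $B=(B_1,\dots,B_L)$ of subsets of $[n]$, drawn as an $L\times n$ grid with rows $1..L$ bottom to top, columns $1..n$ left to right, a ball in cell $(r,j)$ iff $j\in B_r$. The column word $\mathrm{cw}(B)$ scans columns left to right, each column top to bottom, recording row numbers of balls. For a word $w$ and $i\ge1$, $\mathrm{Par}_i(w)$ is obtained by reading $w$ left to right, writing ''('' for each letter $i+1$ and '')'' for each letter $i$, and iteratively matching a ''('' with a '')'' to its right whenever they are adjacent or only matched parentheses lie between them; letters whose parentheses remain unmatched are unmatched. The operator $e_i^\star$ moves every ball of row $i+1$ whose letter $i+1$ in $\mathrm{cw}(B)$ is unmatched in $\mathrm{Par}_i(\mathrm{cw}(B))$ down to the (necessarily empty) cell of row $i$ in the same column. Products of operators denote composition acting right to left. *)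

From mathcomp Require Import all_boot.
Set Implicit Arguments. Unset Strict Implicit. Unset Printing Implicit Defensive.

(* M(L,n): tuples (B_1,...,B_L) of subsets of [n].  Row r (1-based) is stored
   at index r-1 : 'I_L; column j (1-based) is the ordinal j-1 : 'I_n. *)
Definition ballConf (L n : nat) := {ffun 'I_L -> {set 'I_n}}.

(* B_r for a 1-based row number r (empty set if r is out of range). *)
Definition rowset L n (B : ballConf L n) (r : nat) : {set 'I_n} :=
  match r with
  | 0 => set0
  | r'.+1 => match insub r' with Some o => B o | None => set0 end
  end.

(* Column word, each letter tagged by the column it comes from:
   columns left to right, each column top (row L) to bottom (row 1). *)
Definition cw_tagged L n (B : ballConf L n) : seq ('I_n * nat) :=
  flatten [seq [seq (j, r) | r <- rev (iota 1 L) & j \in rowset B r]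
          | j <- enum 'I_n].

Definition cw L n (B : ballConf L n) : seq nat := map snd (cw_tagged B).

(* Par_i: the parenthesis sequence, tagged by column; true = "(" (letter i+1),
   false = ")" (letter i). *)
Definition par_seq L n (i : nat) (B : ballConf L n) : seq ('I_n * bool) :=
  [seq (p.1, p.2 == i.+1) | p <- cw_tagged B & (p.2 == i.+1) || (p.2 == i)].

Fixpoint match_step (T : Type) (s : seq (T * bool)) : seq (T * bool) :=
  match s with
  | x :: ((y :: t) as s') => if x.2 && ~~ y.2 then t else x :: match_step s'
  | _ => s
  end.

(* Iterate matching until no more matches are possible (size s steps suffice,
   since each effective step removes two parentheses). *)
Definition unmatched (T : Type) (s : seq (T * bool)) : seq (T * bool) :=
  iter (size s) (@match_step T) s.

Definition moved_cols L n (i : nat) (B : ballConf L n) : {set 'I_n} :=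
  [set j | (j, true) \in unmatched (par_seq i B)].

Definition estar L n (i : nat) (B : ballConf L n) : ballConf L n :=
  [ffun k : 'I_L =>
     if (k : nat).+1 == i then B k :|: moved_cols i B
     else if (k : nat).+1 == i.+1 then B k :\: moved_cols i B
     else B k].

From mathcomp Require Import all_boot zify.
Set Implicit Arguments. Unset Strict Implicit. Unset Printing Implicit Defensive.

(* Cancelling adjacent pairs "()" until none is left yields a word ")..)(..("
   whose unmatched "(" are read off by a right-to-left scan that counts the ")"
   still waiting for a partner.  Hence e_i^* lowers the ball of row i+1 in
   column j exactly when column j has no ball in row i and no ")" is pending to
   its right.  Recording rows i, i+1, i+2 column by column as a word over
   bool^3, e_i^* and e_(i+1)^* become two right-to-left transducers, and
   idempotence and the braid relation follow by induction on that word, carrying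
   the pending counts of all intermediate words along.  For |i - j| >= 2, e_i^*
   and e_j^* change disjoint pairs of rows and each reads only the rows it
   changes, so they commute. *)

Section BracketMatching.
Variable T : eqType.
Implicit Types (x y : T * bool) (s t : seq (T * bool)).

Fixpoint reduced s : bool :=
  match s with
  | x :: ((y :: _) as s') => ~~ (x.2 && ~~ y.2) && reduced s'
  | _ => true
  end.

(* Right-to-left scan: [(scan s).1] is the number of ")" still waiting for a
   "(" to their left, [(scan s).2] lists the tags of the "(" that find none. *)
Fixpoint scan s : nat * seq T :=
  match s with
  | [::] => (0, [::])
  | x :: s' =>
    let: (c, u) := scan s' in
    if ~~ x.2 then (c.+1, u) else if c is c'.+1 then (c', u) else (0, x.1 :: u)
  end.

Lemma match_step_cons2 x y t : match_step (x :: y :: t) =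
  if x.2 && ~~ y.2 then t else x :: match_step (y :: t).
Proof. by []. Qed.

Lemma reduced_cons2 x y t :
  reduced (x :: y :: t) = ~~ (x.2 && ~~ y.2) && reduced (y :: t).
Proof. by []. Qed.

Lemma match_step_reduced s : reduced s -> match_step s = s.
Proof.
elim: s => [|x [|y t] IH] //.
by rewrite match_step_cons2 reduced_cons2 => /andP[/negbTE -> /IH ->].
Qed.

Lemma size_match_step s : ~~ reduced s -> size (match_step s) + 2 = size s.
Proof.
elim: s => [|x [|y t] IH] //; rewrite match_step_cons2 reduced_cons2.
case: ifP => [_ _|_ /IH IHyt]; first by rewrite /= addn2.
by rewrite [LHS]/= addSn IHyt.
Qed.

Lemma scan_match_step s : scan (match_step s) = scan s.
Proof.
elim: s => [|x [|y t] IH] //; rewrite match_step_cons2.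
case: ifP => [/andP[xo /negbTE yc]|_]; last by rewrite /= IH.
by rewrite /= xo yc /=; case: (scan t).
Qed.

Lemma iter_match_step k s :
  (size (iter k (@match_step T) s) + k.*2 <= size s)
  || reduced (iter k (@match_step T) s).
Proof.
elim: k => [|k IH] /=; first by rewrite addn0 leqnn.
set t := iter k _ s in IH *.
have [red_t|nred_t] := boolP (reduced t); first by rewrite match_step_reduced ?red_t ?orbT.
move: IH; rewrite (negbTE nred_t) orbF -(size_match_step nred_t) doubleS => le_ts.
by apply/orP; left; lia.
Qed.

Lemma reduced_unmatched s : reduced (unmatched s).
Proof.
have /orP[|//] := iter_match_step (size s) s.
by case: s => [|x s] //=; rewrite -!addnn; lia.
Qed.

Lemma scan_unmatched s : scan (unmatched s) = scan s.
Proof. by rewrite /unmatched; elim: (size s) => //= k IH; rewrite scan_match_step. Qed.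

Lemma count_close_reduced a s : reduced ((a, true) :: s) ->
  count (fun x => ~~ x.2) s = 0.
Proof.
elim: s a => [|[b []] t IH] a //; rewrite reduced_cons2 //.
by move=> /andP[_ /IH /= ->].
Qed.

Lemma scan_reduced s : reduced s ->
  scan s = (count (fun x => ~~ x.2) s, [seq x.1 | x <- s & x.2]).
Proof.
elim: s => [|[a o] s IH] //= red_s.
rewrite IH; last by case: s red_s {IH} => // y t /andP[].
by case: o red_s => //= /count_close_reduced ->.
Qed.

Lemma mem_unmatched j s : ((j, true) \in unmatched s) = (j \in (scan s).2).
Proof.
rewrite -scan_unmatched scan_reduced ?reduced_unmatched //=.
by elim: (unmatched s) => [|[a []] t IH] //=; rewrite !in_cons IH xpair_eqE ?andbT ?andbF.
Qed.

End BracketMatching.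

Section TwoRows.
Variable n : nat.
Implicit Types (P Q : {set 'I_n}) (s : seq 'I_n).

(* [P] plays row i+1, whose balls give "(", and [Q] row i, giving ")". *)
Definition par_col P Q j : seq ('I_n * bool) :=
  (if j \in P then [:: (j, true)] else [::]) ++
  (if j \in Q then [:: (j, false)] else [::]).

Definition par_word P Q s := flatten [seq par_col P Q j | j <- s].

Fixpoint pending P Q s : nat :=
  if s is j :: s' then pending P Q s' + (j \in Q) - (j \in P) else 0.

Fixpoint lowered P Q s : seq 'I_n :=
  if s is j :: s' then
    if [&& j \in P, j \notin Q & pending P Q s' == 0] then j :: lowered P Q s'
    else lowered P Q s'
  else [::].

Definition lowered_set P Q : {set 'I_n} := [set j | j \in lowered P Q (enum 'I_n)].

Lemma scan_par_word P Q s : scan (par_word P Q s) = (pending P Q s, lowered P Q s).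
Proof.
elim: s => [|j s IH] //=.
rewrite /par_word /= -/(par_word P Q s) /par_col.
case: (j \in P); case: (j \in Q) => /=; rewrite IH /=.
- by rewrite addn1 subn1.
- by case: (pending P Q s) => [|c] /=; rewrite ?subn1 ?addn0.
- by rewrite addn1 subn0.
- by rewrite addn0 subn0.
Qed.

Lemma lowered_subset P Q s : {subset lowered P Q s <= s}.
Proof.
elim: s => [|k s IH] //= j; case: ifP => _; last by move/IH; rewrite in_cons orbC => ->.
by rewrite !in_cons => /orP[-> //|/IH ->]; rewrite orbT.
Qed.

Lemma mem_lowered_cons P Q j s k :
  (k \in lowered P Q (j :: s)) =
  (k == j) && [&& j \in P, j \notin Q & pending P Q s == 0] || (k \in lowered P Q s).
Proof. by rewrite /=; case: ifP; rewrite ?in_cons ?andbT ?andbF. Qed.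

End TwoRows.

#[local] Arguments rowset : simpl never.

Lemma filter_rev_iota_pair L i : 0 < i < L ->
  [seq r <- rev (iota 1 L) | (r == i.+1) || (r == i)] = [:: i.+1; i].
Proof.
move=> i_range.
have gt_trans : transitive (fun x y : nat => y < x).
  by move=> y x z lt_yx lt_zy; exact: ltn_trans lt_zy lt_yx.
apply: (irr_sorted_eq gt_trans) => [x|||r]; first exact: ltnn.
- by apply: (sorted_filter gt_trans); rewrite rev_sorted; exact: iota_ltn_sorted.
- by rewrite /= ltnSn.
- rewrite mem_filter mem_rev mem_iota !inE.
  by apply/andb_idr => /orP[] /eqP r_eq; lia.
Qed.

Lemma par_seqE L n i (B : ballConf L n) : 0 < i < L ->
  par_seq i B = par_word (rowset B i.+1) (rowset B i) (enum 'I_n).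
Proof.
move=> i_range.
have filter_swap (T : Type) (a b : pred T) s :
    filter a (filter b s) = filter b (filter a s).
  by rewrite -!filter_predI; apply: eq_filter => x; exact: andbC.
rewrite /par_seq /cw_tagged /par_word /par_col filter_flatten map_flatten -!map_comp.
congr flatten; apply: eq_map => j.
rewrite /= filter_map filter_swap -map_comp [filter _ (rev _)](filter_rev_iota_pair i_range).
rewrite /=; case: (j \in rowset B i.+1); case: (j \in rowset B i) => /=.
all: by rewrite ?eqxx ?ltn_eqF.
Qed.

Lemma moved_colsE L n i (B : ballConf L n) : 0 < i < L ->
  moved_cols i B = lowered_set (rowset B i.+1) (rowset B i).
Proof.
by move=> i_range; apply/setP => j; rewrite !inE par_seqE // mem_unmatched scan_par_word.
Qed.

Lemma rowset_estar L n i (B : ballConf L n) r : 0 < i < L ->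
  rowset (estar i B) r =
    if r == i then rowset B r :|: moved_cols i B
    else if r == i.+1 then rowset B r :\: moved_cols i B
    else rowset B r.
Proof.
move=> i_range; rewrite /rowset; case: r => [|r]; first by rewrite eq_sym gtn_eqF //; lia.
by case: insubP => [k _ <-|r_out]; [rewrite ffunE | rewrite !ifN_eq //; lia].
Qed.

Lemma ballConf_eq L n (B B' : ballConf L n) :
  (forall r, rowset B r = rowset B' r) -> B = B'.
Proof. by move=> eq_rows; apply/ffunP => k; have := eq_rows (val k).+1; rewrite /rowset valK. Qed.

(* A column of rows i, i+1, i+2; on words of such columns, [lower1] and
   [lower2] act as e_i^* and e_(i+1)^* do, by the characterisation of
   [moved_cols] through [lowered]. *)
Definition col3 := (bool * bool * bool)%type.
Implicit Types w : seq col3.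

Fixpoint pending1 w : nat :=
  if w is (x, y, _) :: w' then pending1 w' + x - y else 0.
Fixpoint pending2 w : nat :=
  if w is (_, y, z) :: w' then pending2 w' + y - z else 0.

Fixpoint lower1 w : seq col3 :=
  if w is (x, y, z) :: w' then
    (if [&& y, ~~ x & pending1 w' == 0] then (true, false, z) else (x, y, z))
      :: lower1 w'
  else [::].
Fixpoint lower2 w : seq col3 :=
  if w is (x, y, z) :: w' then
    (if [&& z, ~~ y & pending2 w' == 0] then (x, true, false) else (x, y, z))
      :: lower2 w'
  else [::].

Lemma pending1_lower1 w : pending1 w <= pending1 (lower1 w).
Proof.
elim: w => [|[[x y] z] w IH] //=.
by case: x; case: y => /=; repeat (case: eqP => ? /=); lia.
Qed.

Lemma lower1_idem w : lower1 (lower1 w) = lower1 w.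
Proof.
elim: w => [|[[x y] z] w IH] //=.
have := pending1_lower1 w.
by case: x; case: y => /=; repeat (case: eqP => ? /=); rewrite IH // => ?; lia.
Qed.

(* The pending counts of the six intermediate words of the braid relation are
   tied together at every suffix; this is what decides that both sides treat
   the leftmost column alike. *)
Lemma braid_invariant w :
  let a := pending1 w in let b := pending2 (lower1 w) in
  let c := pending1 (lower2 (lower1 w)) in
  let d := pending2 w in let e := pending1 (lower2 w) in
  let f := pending2 (lower1 (lower2 w)) in
  [/\ e = minn a c, d + e = b + c, f + e = a + b &
      lower1 (lower2 (lower1 w)) = lower2 (lower1 (lower2 w))].
Proof.
elim: w => [|[[x y] z] w [IH1 IH2 IH3 IH4]] //=.
case: x; case: y; case: z => /=; repeat (case: eqP => ? /=);
  rewrite IH4; (split; [lia|lia|lia|]); first [by [] | exfalso; lia].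
Qed.

Section ThreeRows.
Variable n : nat.
Implicit Types (X Y Z : {set 'I_n}) (s : seq 'I_n).

Definition col3_word X Y Z s : seq col3 := [seq (j \in X, j \in Y, j \in Z) | j <- s].

Lemma pending1_col3_word X Y Z s : pending1 (col3_word X Y Z s) = pending Y X s.
Proof. by elim: s => [|j s IH] //=; rewrite IH. Qed.

Lemma pending2_col3_word X Y Z s : pending2 (col3_word X Y Z s) = pending Z Y s.
Proof. by elim: s => [|j s IH] //=; rewrite IH. Qed.

Lemma lower1_col3_word X Y Z s : uniq s ->
  let M := [set j | j \in lowered Y X s] in
  lower1 (col3_word X Y Z s) = col3_word (X :|: M) (Y :\: M) Z s.
Proof.
elim: s => [|j s IH] //= /andP[j_notin_s uniq_s].
have not_lowered_j : j \notin lowered Y X s.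
  by apply: contra j_notin_s; exact: lowered_subset.
rewrite IH // pending1_col3_word; congr cons.
  rewrite !inE mem_lowered_cons eqxx (negbTE not_lowered_j) orbF.
  by case: (j \in X); case: (j \in Y); case: (pending Y X s == 0).
apply/eq_in_map => k k_in_s; rewrite !inE mem_lowered_cons.
by rewrite (_ : k == j = false) //; apply: contraNF j_notin_s => /eqP <-.
Qed.

Lemma lower2_col3_word X Y Z s : uniq s ->
  let M := [set j | j \in lowered Z Y s] in
  lower2 (col3_word X Y Z s) = col3_word X (Y :|: M) (Z :\: M) s.
Proof.
elim: s => [|j s IH] //= /andP[j_notin_s uniq_s].
have not_lowered_j : j \notin lowered Z Y s.
  by apply: contra j_notin_s; exact: lowered_subset.
rewrite IH // pending2_col3_word; congr cons.
  rewrite !inE mem_lowered_cons eqxx (negbTE not_lowered_j) orbF.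
  by case: (j \in Y); case: (j \in Z); case: (pending Z Y s == 0).
apply/eq_in_map => k k_in_s; rewrite !inE mem_lowered_cons.
by rewrite (_ : k == j = false) //; apply: contraNF j_notin_s => /eqP <-.
Qed.

Lemma col3_word_enum_inj X Y Z X' Y' Z' :
  col3_word X Y Z (enum 'I_n) = col3_word X' Y' Z' (enum 'I_n) ->
  [/\ X = X', Y = Y' & Z = Z'].
Proof.
move/eq_in_map => eq_cols.
by split; apply/setP => j; case: (eq_cols j (mem_enum _ j)).
Qed.
End ThreeRows.

Section Operators.
Variables L n : nat.
Implicit Types B : ballConf L n.

Lemma rowset_estar_lo i B : 0 < i < L ->
  rowset (estar i B) i = rowset B i :|: moved_cols i B.
Proof. by move=> i_range; rewrite rowset_estar // eqxx. Qed.

Lemma rowset_estar_hi i B : 0 < i < L ->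
  rowset (estar i B) i.+1 = rowset B i.+1 :\: moved_cols i B.
Proof. by move=> i_range; rewrite rowset_estar // eqxx gtn_eqF. Qed.

Lemma rowset_estar_other i B r : 0 < i < L -> r != i -> r != i.+1 ->
  rowset (estar i B) r = rowset B r.
Proof. by move=> i_range /negbTE r_i /negbTE r_i1; rewrite rowset_estar // r_i r_i1. Qed.

Definition word3 i B := col3_word (rowset B i) (rowset B i.+1) (rowset B i.+2) (enum 'I_n).

Lemma word3_estar i B : 0 < i < L -> word3 i (estar i B) = lower1 (word3 i B).
Proof.
move=> i_range.
rewrite /word3 rowset_estar_lo // rowset_estar_hi // (@rowset_estar_other i _ i.+2) //; try lia.
by rewrite moved_colsE // lower1_col3_word // enum_uniq.
Qed.

Lemma word3_estar_succ i B : 0 < i -> i.+1 < L ->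
  word3 i (estar i.+1 B) = lower2 (word3 i B).
Proof.
move=> i_gt0 i1_ltL; have i1_range : 0 < i.+1 < L by rewrite i1_ltL.
rewrite /word3 rowset_estar_lo // rowset_estar_hi // (@rowset_estar_other i.+1 _ i) //; try lia.
by rewrite moved_colsE // lower2_col3_word // enum_uniq.
Qed.

Lemma estar_idem i B : 0 < i < L -> estar i (estar i B) = estar i B.
Proof.
move=> i_range.
have : word3 i (estar i (estar i B)) = word3 i (estar i B).
  by rewrite !word3_estar // lower1_idem.
case/col3_word_enum_inj => eq_i eq_i1 _.
apply: ballConf_eq => r.
have [->|r_i] := eqVneq r i; first exact: eq_i.
have [->|r_i1] := eqVneq r i.+1; first exact: eq_i1.
by rewrite !rowset_estar_other.
Qed.

Lemma estar_braid i B : 0 < i -> i.+1 < L ->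
  estar i (estar i.+1 (estar i B)) = estar i.+1 (estar i (estar i.+1 B)).
Proof.
move=> i_gt0 i1_ltL; have i_range : 0 < i < L by rewrite i_gt0 ltnW.
have i1_range : 0 < i.+1 < L by rewrite i1_ltL.
have : word3 i (estar i (estar i.+1 (estar i B))) =
       word3 i (estar i.+1 (estar i (estar i.+1 B))).
  rewrite !(word3_estar, word3_estar_succ) //.
  by case: (braid_invariant (word3 i B)).
case/col3_word_enum_inj => eq_i eq_i1 eq_i2.
apply: ballConf_eq => r.
have [->|r_i] := eqVneq r i; first exact: eq_i.
have [->|r_i1] := eqVneq r i.+1; first exact: eq_i1.
have [->|r_i2] := eqVneq r i.+2; first exact: eq_i2.
by rewrite !rowset_estar_other.
Qed.

Lemma moved_cols_estar_far i j B : 0 < i < L -> 0 < j < L ->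
  (1 < i - j) || (1 < j - i) -> moved_cols i (estar j B) = moved_cols i B.
Proof.
move=> i_range j_range far.
by rewrite !moved_colsE // !(@rowset_estar_other j) //; lia.
Qed.

Lemma estar_comm i j B : 0 < i < L -> 0 < j < L ->
  (1 < i - j) || (1 < j - i) -> estar i (estar j B) = estar j (estar i B).
Proof.
move=> i_range j_range far; have far' : (1 < j - i) || (1 < i - j) by rewrite orbC.
apply: ballConf_eq => r; rewrite !rowset_estar // !moved_cols_estar_far //.
by repeat case: eqP => ?; subst; try lia.
Qed.

End Operators.

Theorem theorem4p6 (L n : nat) (hL : 0 < L) (hn : 0 < n) :
  (forall i, 1 <= i <= L - 1 ->
     forall B : ballConf L n, estar i (estar i B) = estar i B) /\
  (forall i j, 1 <= i <= L - 1 -> 1 <= j <= L - 1 ->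
     (1 < i - j) || (1 < j - i) ->
     forall B : ballConf L n, estar i (estar j B) = estar j (estar i B)) /\
  (forall i, 1 <= i <= L - 2 ->
     forall B : ballConf L n,
       estar i (estar i.+1 (estar i B)) = estar i.+1 (estar i (estar i.+1 B))).
Proof.
have row_range i : 1 <= i <= L - 1 -> 0 < i < L by lia.
split; [|split].
- by move=> i /row_range i_range B; exact: estar_idem.
- by move=> i j /row_range i_range /row_range j_range far B; exact: estar_comm.
- by move=> i i_range B; apply: estar_braid; lia.
Qed.
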